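(* Let $(\mathcal{X},d)$ be a finite metric space with at least two points, let $\mu,\nu\in\mathcal{M}_+(\mathcal{X})$, $p\ge 1$ and $C>0$. Fix a resolution $q>1$ and a depth $L\in\mathbb{N}$, and let $Q_0,\dots,Q_{L+1}$, the tree $\mathcal{T}$, the descendant sets $\mathcal{C}(\cdot)$ and the height function $h_{q,L}(k)=\frac{q^{1-k}-q^{-L}}{q-1}\mathrm{diam}(\mathcal{X})$ be as in the context. For $l\in\{1,\dots,L+1\}$ set $$B_{q,p,L,\mathcal{X}}(l)=2^{p-1}\sum_{j=l}^{L+1}\sum_{x\in Q_j}\big(h_{q,L}(j-1)^p-h_{q,L}(j)^p\big)\,\big|\mu^L(\mathcal{C}(x,j))-\nu^L(\mathcal{C}(x,j))\big|.$$ Then: (i) if $C\ge 2h_{q,L}(0)$, then $\mathrm{KR}^p_{p,C}(\mu,\nu)\le \big(\tfrac{C^p}{2}-2^{p-1}h_{q,L}(0)^p\big)|\mathbb{M}(\mu)-\mathbb{M}(\nu)|+B_{q,p,L,\mathcal{X}}(1)$; (ii) if $2h_{q,L}(l)\le C<2h_{q,L}(l-1)$ for some $l\in\{1,\dots,L\}$, then $\mathrm{KR}^p_{p,C}(\mu,\nu)\le B_{q,p,L,\mathcal{X}}(l)$; (iii) if $C\le \max\{2h_{q,L}(L),\ \min_{x\neq x'}d(x,x')\}$, then $\mathrm{KR}^p_{p,C}(\mu,\nu)\le \frac{C^p}{2}\mathrm{TV}(\mu,\nu)$, where $\mathrm{TV}(\mu,\nu)=\sum_{x\in\mathcal{X}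}|\mu(x)-\nu(x)|$.
   Context: $\mathcal{M}_+(\mathcal{X})$ is the set of non-negative measures on the finite set $\mathcal{X}$ (identified with vectors $(\mu(x))_{x\in\mathcal{X}}$), $\mathbb{M}(\mu)=\sum_x\mu(x)$ its total mass. For $\pi\in\mathcal{M}_+(\mathcal{X}\times\mathcal{X})$, marginals are $\pi(x,\mathcal{X})=\sum_{x'}\pi(x,x')$, $\pi(\mathcal{X},x')=\sum_x\pi(x,x')$. The set of sub-couplings is $\Pi_{\le}(\mu,\nu)=\{\pi\in\mathcal{M}_+(\mathcal{X}\times\mathcal{X}):\pi(x,\mathcal{X})\le\mu(x),\ \pi(\mathcal{X},x')\le\nu(x')\ \forall x,x'\}$. For $p\ge1$, $C>0$ the $(p,C)$-Kantorovich–Rubinstein distance is $$\mathrm{KR}_{p,C}(\mu,\nu)=\Big(\min_{\pi\in\Pi_\le(\mu,\nu)}\sum_{x,x'}d^p(x,x')\pi(x,x')+C^p\Big(\tfrac{\mathbb{M}(\mu)+\mathbb{M}(\nu)}{2}-\mathbb{M}(\pi)\Big)\Big)^{1/p}.$$ Tree construction: for $\epsilon>0$, an $\epsilon$-cover of $\mathcal{X}$ is a subset $S\subset\mathcal{X}$ such that every $x\in\mathcal{X}$ has $d(x,y)\le\epsilon$ for some $y\in S$. For $j=0,\dots,L$ let $Q_j\subset\mathcal{X}$ be a $q^{-j}\mathrm{diam}(\mathcal{X})$-cover of minimal cardinality (so $|Q_0|=1$), and $Q_{L+1}=\mathcal{X}$. The nodes of $\mathcal{T}$ are the pairs $(x,j)$,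 $x\in Q_j$, $j=0,\dots,L+1$; the root is the unique node of level $0$. Each node $(x',j+1)$ is joined by an edge to exactly one node $(x,j)$ with $d(x,x')\le q^{-j}\mathrm{diam}(\mathcal{X})$ (its parent; ties broken arbitrarily). A node at level $k$ has height $h_{q,L}(k)$, so leaves (level $L+1$, identified with the points of $\mathcal{X}$) have height $0$. For a node $v$, $\mathcal{C}(v)$ denotes the set of nodes whose path to the root passes through $v$ (including $v$). The measure $\mu^L$ is $\mu$ viewed as a measure on the leaves, so $\mu^L(\mathcal{C}(v))$ is the total $\mu$-mass of the points $x\in\mathcal{X}$ whose leaf $(x,L+1)$ descends from $v$; similarly $\nu^L$. *)

From HB Require Import structures.
From mathcomp Require Import all_boot all_order all_algebra.
From mathcomp Require Import all_classical all_reals all_analysis.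
Set Implicit Arguments. Unset Strict Implicit. Unset Printing Implicit Defensive.
Import Order.TTheory GRing.Theory Num.Theory.
Local Open Scope ring_scope.
Local Open Scope classical_set_scope.

Definition setTfin (X : finType) : {set X} := finset.setTfor X.

Section KRDefs.
Variables (R : realType) (X : finType).

Definition is_metric (d : X -> X -> R) : Prop :=
  [/\ forall x y, 0 <= d x y,
      forall x y, d x y = 0 <-> x = y,
      forall x y, d x y = d y x &
      forall x y z, d x z <= d x y + d y z].

Definition diam (d : X -> X -> R) : R :=
  \big[Num.max/0]_(x : X) \big[Num.max/0]_(y : X) d x y.

(* min_{x <> x'} d(x,x'); the neutral element diam X is >= every distance,
   so this is the true minimum as soon as X has two points. *)
Definition min_dist (d : X -> X -> R) : R :=
  \big[Num.min/diam d]_(x : X) \big[Num.min/diam d]_(y : X | y != x) d x y.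

Definition is_measure (mu : X -> R) : Prop := forall x, 0 <= mu x.

Definition mass (mu : X -> R) : R := \sum_(x : X) mu x.

Definition TV (mu nu : X -> R) : R := \sum_(x : X) `|mu x - nu x|.

Definition subcoupling (mu nu : X -> R) (pi : X -> X -> R) : Prop :=
  [/\ forall x x', 0 <= pi x x',
      forall x, \sum_(x' : X) pi x x' <= mu x &
      forall x', \sum_(x : X) pi x x' <= nu x'].

Definition KR_cost (d : X -> X -> R) (p C : R) (mu nu : X -> R)
    (pi : X -> X -> R) : R :=
  \sum_(x : X) \sum_(x' : X) (d x x' `^ p) * pi x x'
  + (C `^ p) * ((mass mu + mass nu) / 2 - \sum_(x : X) \sum_(x' : X) pi x x').

(* KR_{p,C}(mu,nu) = (min over sub-couplings of the cost)^(1/p);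
   the min is written as an infimum (it is attained). *)
Definition KR (d : X -> X -> R) (p C : R) (mu nu : X -> R) : R :=
  (inf [set KR_cost d p C mu nu pi | pi in subcoupling mu nu]) `^ (p^-1).

Definition is_cover (d : X -> X -> R) (eps : R) (S : {set X}) : Prop :=
  forall x : X, exists2 y, y \in S & d x y <= eps.

Definition min_cover (d : X -> X -> R) (eps : R) (S : {set X}) : Prop :=
  is_cover d eps S /\ forall S' : {set X}, is_cover d eps S' -> (#|S| <= #|S'|)%N.

(* Tree data: Q j (j = 0..L+1) the node sets of level j, par j x' the
   (point of the) parent at level j of the node (x', j+1). *)
Definition tree_data (d : X -> X -> R) (q : R) (L : nat)
    (Q : nat -> {set X}) (par : nat -> X -> X) : Prop :=
  [/\ forall j, (j <= L)%N -> min_cover d (q `^ (- j%:R) * diam d) (Q j),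
      Q L.+1 = setTfin X &
      forall j x', (j <= L)%N -> x' \in Q j.+1 ->
        par j x' \in Q j /\ d (par j x') x' <= q `^ (- j%:R) * diam d].

(* ancestor at level L+1-m of the leaf (y, L+1) *)
Fixpoint anc_steps (L : nat) (par : nat -> X -> X) (m : nat) (y : X) : X :=
  match m with
  | 0 => y
  | m'.+1 => par (L - m')%N (anc_steps L par m' y)
  end.

Definition anc (L : nat) (par : nat -> X -> X) (j : nat) (y : X) : X :=
  anc_steps L par (L.+1 - j) y.

Definition mass_desc (L : nat) (par : nat -> X -> X) (mu : X -> R)
    (x : X) (j : nat) : R :=
  \sum_(y : X | anc L par j y == x) mu y.

Definition height (d : X -> X -> R) (q : R) (L k : nat) : R :=
  (q `^ (1 - k%:R) - q `^ (- L%:R)) / (q - 1) * diam d.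

Definition Bq (d : X -> X -> R) (q p : R) (L : nat) (Q : nat -> {set X})
    (par : nat -> X -> X) (mu nu : X -> R) (l : nat) : R :=
  2 `^ (p - 1) *
  \sum_(l <= j < L.+2) \sum_(x in Q j)
     ((height d q L j.-1 `^ p - height d q L j `^ p)
      * `|mass_desc L par mu x j - mass_desc L par nu x j|).

End KRDefs.

From HB Require Import structures.
From mathcomp Require Import all_boot all_order all_algebra.
From mathcomp Require Import all_classical all_reals all_analysis.
From mathcomp Require Import zify ring lra.
Import Order.TTheory GRing.Theory Num.Theory.
Local Open Scope ring_scope.

(* The three bounds are the costs of explicit sub-couplings built greedily
   along the tree, from the leaves up to some level l.  At level j the
   still unmatched masses a (of mu) and b (of nu) are matched proportionally
   inside every node (x, j): y is sent to y' with mass a(y) b(y') / max(A, B),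
   where A, B are the unmatched masses of the node.  Afterwards the node
   carries unmatched mass of one measure only, of total |A - B|, and this
   difference is the same as |mu^L(C(x,j)) - nu^L(C(x,j))| because matching
   inside a node never changes the mass difference of a node or of its
   ancestors.  Two points of a level-j node are at distance <= 2 h(j), so the
   level-j matching costs at most (2 h(j))^p per unit of matched mass, and the
   matched mass is half the drop of unmatched mass between levels j+1 and j.
   Stopping after level l and summing by parts, the plan costs
   B(l+1) + (C^p/2 - 2^(p-1) h(l)^p) D(l), D(l) being the unmatched mass;
   the cases (i), (ii), (iii) are the choices l = 0, l, L+1.  Only case (ii)
   uses its assumption on C (through C <= 2 h(l-1)); the assumptions of (i)
   and (iii) merely delimit the range where those bounds are the relevant ones. *)

Lemma proportional_residual (R : realFieldType) (A B : R) : 0 <= A -> 0 <= B ->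
  A * (1 - B / Num.max A B) + B * (1 - A / Num.max A B) = `|A - B|.
Proof.
move=> A0 B0; have [AB|BA] := leP A B.
  rewrite distrC ger0_norm ?subr_ge0 //.
  have [B0e|Bn0] := eqVneq B 0.
    have A0e : A = 0 by apply/le_anti; rewrite A0 andbT -B0e AB.
    by rewrite A0e B0e !mul0r subrr addr0.
  by field.
rewrite ger0_norm ?subr_ge0 ?(ltW BA) //.
have An0 : A != 0 by rewrite gt_eqF // (le_lt_trans B0 BA).
by field.
Qed.

Lemma sum_by_parts (R : comRingType) (f D : nat -> R) (l n : nat) : (l <= n)%N ->
  \sum_(l <= j < n.+1) f j * (D j.+1 - D j) =
  f n * D n.+1 - f l * D l + \sum_(l.+1 <= j < n.+1) (f j.-1 - f j) * D j.
Proof.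
elim: n => [|n IH] ln.
  have -> : l = 0%N by lia.
  by rewrite big_nat1 big_geq //; ring.
have [->|ne] := eqVneq l n.+1; first by rewrite big_nat1 big_geq //; ring.
rewrite big_nat_recr /=; last by lia.
rewrite IH; last by lia.
by rewrite [in RHS]big_nat_recr /=; [ring | lia].
Qed.

Section KRCost.
Context {R : realType} {X : finType} {d : X -> X -> R} {p C : R}
  {mu nu : X -> R}.

(* The cost of a sub-coupling is nonnegative: its total mass is at most
   the masses of both marginals. *)
Lemma KR_cost_ge0 (pi : X -> X -> R) :
  subcoupling mu nu pi -> 0 <= KR_cost d p C mu nu pi.
Proof.
case=> pi0 row col; apply: addr_ge0.
  by do 2 (apply: sumr_ge0 => ? _); apply: mulr_ge0 => //; apply: powR_ge0.
apply: mulr_ge0; first exact: powR_ge0.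
have le_mu : \sum_x \sum_x' pi x x' <= mass mu by apply: ler_sum => x _.
have le_nu : \sum_x \sum_x' pi x x' <= mass nu.
  by rewrite exchange_big; apply: ler_sum => x _.
lra.
Qed.

Lemma KR_pow_le_cost (pi : X -> X -> R) : p != 0 ->
  subcoupling mu nu pi -> KR d p C mu nu `^ p <= KR_cost d p C mu nu pi.
Proof.
move=> p0 spi; rewrite /KR.
set S := (E in inf E).
have S_ge0 c : S c -> 0 <= c by case=> pi' spi' <-; apply: KR_cost_ge0.
have Spi : S (KR_cost d p C mu nu pi) by exists pi.
have inf_ge0 : 0 <= inf S by apply: lb_le_inf; [exists (KR_cost d p C mu nu pi) | ].
rewrite -powRrM mulVf // (powRr1 inf_ge0).
by apply: (ge_inf _ Spi); exists 0 => c /S_ge0.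
Qed.

End KRCost.

Section ProportionalMatching.
(* Classes are the fibres of an arbitrary map g; a and b are the masses to
   be matched, only inside classes. *)
Context {R : realFieldType} {X Y : finType} (g : X -> Y).
Implicit Types (a b : X -> R).

Definition class_mass a y := \sum_(z | g z == g y) a z.

Definition class_max a b y := Num.max (class_mass a y) (class_mass b y).

Definition match_plan a b y y' :=
  if g y == g y' then a y * b y' / class_max a b y else 0.

Definition unmatched_l a b y := a y - \sum_y' match_plan a b y y'.
Definition unmatched_r a b y' := b y' - \sum_y match_plan a b y y'.

Context {a b : X -> R} (a0 : forall z, 0 <= a z) (b0 : forall z, 0 <= b z).

Lemma class_mass_ge0 c y : (forall z, 0 <= c z) -> 0 <= class_mass c y.
Proof. by move=> c0; apply: sumr_ge0. Qed.

Lemma class_max_eq y y' : g y = g y' -> class_max a b y = class_max a b y'.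
Proof. by rewrite /class_max /class_mass => ->. Qed.

Lemma match_plan_ge0 y y' : 0 <= match_plan a b y y'.
Proof.
rewrite /match_plan; case: ifP => // _.
apply: divr_ge0; first exact: mulr_ge0.
by rewrite /class_max le_max class_mass_ge0.
Qed.

Lemma match_row_sum y : \sum_y' match_plan a b y y' = a y * class_mass b y / class_max a b y.
Proof.
rewrite /match_plan; under eq_bigr => y' _ do rewrite (eq_sym (g y)).
by rewrite -big_mkcond /= /class_mass mulr_sumr mulr_suml.
Qed.

Lemma match_col_sum y' : \sum_y match_plan a b y y' = b y' * class_mass a y' / class_max a b y'.
Proof.
rewrite /match_plan (eq_bigr (fun y => if g y == g y' then
  a y * b y' / class_max a b y' else 0)); last first.
  by move=> y _; case: ifP => // /eqP e; rewrite (class_max_eq _ _ e).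
rewrite -big_mkcond /= /class_mass mulr_sumr mulr_suml.
by apply: eq_bigr => y _; rewrite (mulrC (a y)).
Qed.

Lemma scaled_le (u c M : R) : 0 <= u -> 0 <= c -> c <= M -> u * c / M <= u.
Proof.
move=> u0 c0 cM; have [->|Mn0] := eqVneq M 0; first by rewrite invr0 mulr0.
have Mp : 0 < M by rewrite lt_def Mn0 (le_trans c0 cM).
by rewrite ler_pdivrMr // ler_wpM2l.
Qed.

Lemma unmatched_l_ge0 y : 0 <= unmatched_l a b y.
Proof.
rewrite /unmatched_l match_row_sum subr_ge0 scaled_le ?class_mass_ge0 //.
by rewrite le_max lexx orbT.
Qed.

Lemma unmatched_r_ge0 y : 0 <= unmatched_r a b y.
Proof.
rewrite /unmatched_r match_col_sum subr_ge0 scaled_le ?class_mass_ge0 //.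
by rewrite le_max lexx.
Qed.

(* Each matched unit is removed once from a and once from b. *)
Lemma unmatched_mass :
  \sum_y unmatched_l a b y + \sum_y unmatched_r a b y =
  \sum_y a y + \sum_y b y - 2 * \sum_y \sum_y' match_plan a b y y'.
Proof.
have swap : \sum_y' \sum_y match_plan a b y y' = \sum_y \sum_y' match_plan a b y y'.
  exact: exchange_big.
by rewrite /unmatched_l /unmatched_r !sumrB swap; ring.
Qed.

Lemma unmatched_class_diff (Z : eqType) (h : X -> Z) x :
  (forall y y', g y = g y' -> h y = h y') ->
  \sum_(y | h y == x) (unmatched_l a b y - unmatched_r a b y) =
  \sum_(y | h y == x) (a y - b y).
Proof.
move=> hg.
have restrict (y y' : X) : h y == x -> h y' != x -> match_plan a b y y' = 0
  /\ match_plan a b y' y = 0.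
  move=> /eqP hy hy'; rewrite /match_plan.
  have gne : (g y == g y') = false.
    by apply/negbTE/eqP => /hg e; move: hy'; rewrite -e hy eqxx.
  by rewrite gne eq_sym gne.
have rows : \sum_(y | h y == x) \sum_y' match_plan a b y y' =
            \sum_(y | h y == x) \sum_(y' | h y' == x) match_plan a b y y'.
  apply: eq_bigr => y hy; rewrite [RHS]big_mkcond; apply: eq_bigr => y' _.
  by case: ifPn => // /(restrict _ _ hy) [].
have cols : \sum_(y' | h y' == x) \sum_y match_plan a b y y' =
            \sum_(y' | h y' == x) \sum_(y | h y == x) match_plan a b y y'.
  apply: eq_bigr => y' hy'; rewrite [RHS]big_mkcond; apply: eq_bigr => y _.
  by case: ifPn => // /(restrict _ _ hy') [].
have swap : \sum_(y | h y == x) \sum_y' match_plan a b y y' =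
            \sum_(y' | h y' == x) \sum_y match_plan a b y y'.
  by rewrite rows cols exchange_big.
have cancel : \sum_(y | h y == x)
    (\sum_y' match_plan a b y y' - \sum_y'' match_plan a b y'' y) = 0.
  by rewrite sumrB swap subrr.
transitivity (\sum_(y | h y == x) ((a y - b y) -
    (\sum_y' match_plan a b y y' - \sum_y'' match_plan a b y'' y))).
  by apply: eq_bigr => y _; rewrite /unmatched_l /unmatched_r; ring.
by rewrite sumrB cancel subr0.
Qed.

Lemma unmatched_total (S : {set Y}) : (forall y, g y \in S) ->
  \sum_y unmatched_l a b y + \sum_y unmatched_r a b y =
  \sum_(x in S) `|\sum_(y | g y == x) a y - \sum_(y | g y == x) b y|.
Proof.
move=> gS; rewrite -big_split /= (partition_big g (fun x => x \in S)) //=.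
apply: eq_bigr => x _.
set A := \sum_(y | g y == x) a y; set B := \sum_(y | g y == x) b y.
rewrite -proportional_residual ?sumr_ge0 //.
transitivity (\sum_(y | g y == x)
    (a y * (1 - B / Num.max A B) + b y * (1 - A / Num.max A B))).
  apply: eq_bigr => y /eqP gy.
  rewrite /unmatched_l /unmatched_r match_row_sum match_col_sum /class_max.
  by rewrite /class_mass gy -/A -/B; ring.
by rewrite big_split /= -!mulr_suml.
Qed.

Lemma match_plan_cost (cost : X -> X -> R) (c : R) :
  (forall y y', g y = g y' -> cost y y' <= c) ->
  \sum_y \sum_y' cost y y' * match_plan a b y y' <=
  c * \sum_y \sum_y' match_plan a b y y'.
Proof.
move=> hc; rewrite mulr_sumr; apply: ler_sum => y _.
rewrite mulr_sumr; apply: ler_sum => y' _.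
have := match_plan_ge0 y y'.
rewrite /match_plan; case: ifP => [/eqP e|_] m0; last by rewrite !mulr0.
by apply: ler_wpM2r => //; apply: hc.
Qed.

End ProportionalMatching.

Section Ancestors.
Context {X : finType} {L : nat} {par : nat -> X -> X}.

Lemma anc_leaf y : anc L par L.+1 y = y.
Proof. by rewrite /anc subnn. Qed.

Lemma anc_succ j y : (j <= L)%N -> anc L par j y = par j (anc L par j.+1 y).
Proof.
move=> jL; rewrite /anc subSS.
have -> : (L.+1 - j = (L - j).+1)%N by lia.
by rewrite /= subKn.
Qed.

Lemma level_ind (P : nat -> Prop) : P L.+1 ->
  (forall j, (j <= L)%N -> P j.+1 -> P j) -> forall j, (j <= L.+1)%N -> P j.
Proof.
move=> PL Pstep j jL; rewrite -(subKn jL).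
elim: (L.+1 - j)%N (leq_subr j L.+1) => [|n IH] nL; first by rewrite subn0.
have e : (L.+1 - n = (L - n).+1)%N by lia.
have -> : (L.+1 - n.+1 = L - n)%N by lia.
by apply: Pstep; [exact: leq_subr | rewrite -e; apply: IH; lia].
Qed.

Lemma anc_coarsen j0 y y' : (j0 <= L.+1)%N -> anc L par j0 y = anc L par j0 y' ->
  forall j, (j <= j0)%N -> anc L par j y = anc L par j y'.
Proof.
move=> j0L e j jj0; rewrite -(subKn jj0).
elim: (j0 - j)%N (leq_subr j j0) => [|n IH] nj0; first by rewrite subn0.
have e1 : (j0 - n = (j0 - n.+1).+1)%N by lia.
by rewrite !(@anc_succ (j0 - n.+1)) -?e1 ?IH //; lia.
Qed.

End Ancestors.

Section TreeGeometry.
Context {R : realType} {X : finType} {d : X -> X -> R} {q : R} {L : nat}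
  {Q : nat -> {set X}} {par : nat -> X -> X}.
Context (dm : is_metric d) (q1 : 1 < q) (td : tree_data d q L Q par).

Lemma anc_in j y : (j <= L.+1)%N -> anc L par j y \in Q j.
Proof.
case: td => _ QT hpar; move: j; apply: level_ind => [|k kL ak].
  by rewrite anc_leaf QT /setTfin finset.in_setT.
by rewrite anc_succ //; case: (hpar k _ kL ak).
Qed.

Lemma le_diam x y : d x y <= diam d.
Proof.
apply: le_trans (le_bigmax 0 (fun y => d x y) y) _.
exact: (le_bigmax 0 (fun x => \big[Num.max/0]_y d x y) x).
Qed.

Lemma diam_ge0 : 0 <= diam d.
Proof. by rewrite /diam; elim/big_rec: _ => // x m _ m0; rewrite le_max m0 orbT. Qed.

Lemma height_leaf : height d q L L.+1 = 0.
Proof.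
rewrite /height -natr1.
have -> : 1 - (L%:R + 1) = - L%:R :> R by ring.
by rewrite subrr !mul0r.
Qed.

(* h(k) = q^(-k) diam + h(k+1): the height is the sum of the edge lengths
   below level k. *)
Lemma height_succ k : height d q L k = q `^ (- k%:R) * diam d + height d q L k.+1.
Proof.
rewrite /height -natr1.
have -> : 1 - (k%:R + 1) = - k%:R :> R by ring.
have q0 : 0 < q by apply: lt_trans q1.
rewrite powRD; last by apply/implyP => _; rewrite gt_eqF.
rewrite powRr1; last exact: ltW.
have qn1 : q - 1 != 0 by rewrite subr_eq0 gt_eqF.
by field.
Qed.

Lemma height_ge0 k : (k <= L.+1)%N -> 0 <= height d q L k.
Proof.
move: k; apply: level_ind => [|j _ hj]; first by rewrite height_leaf.
by rewrite height_succ addr_ge0 // mulr_ge0 ?powR_ge0 ?diam_ge0.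
Qed.

Lemma dist_anc j y : (j <= L.+1)%N -> d y (anc L par j y) <= height d q L j.
Proof.
case: dm => _ d0 ds dt; case: td => _ _ hpar.
move: j; apply: level_ind => [|k kL hk].
  by rewrite height_leaf anc_leaf (proj2 (d0 y y)).
have [_ hz] := hpar k _ kL (@anc_in k.+1 y kL).
rewrite anc_succ // height_succ addrC.
by apply: le_trans (dt _ (anc L par k.+1 y) _) _; rewrite lerD // ds.
Qed.

Lemma dist_same_anc j y y' : (j <= L.+1)%N -> anc L par j y = anc L par j y' ->
  d y y' <= 2 * height d q L j.
Proof.
case: dm => _ _ ds dt => jL e.
apply: le_trans (dt _ (anc L par j y) _) _.
by rewrite mulr2n mulrDl mul1r lerD ?dist_anc // ds e dist_anc.
Qed.

(* Level 0 is a single node: a minimal cover at scale diam has one point. *)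
Lemma root_singleton : (0 < #|X|)%N -> exists x0, Q 0 = [set x0]%SET.
Proof.
move=> X0; case: td => hmin _ _; have [cov minc] := hmin 0%N (leq0n _).
have [z _] := card_gt0P X0; have [y yQ _] := cov z.
have cov1 : is_cover d (q `^ (- (0%N)%:R) * diam d) [set y]%SET.
  move=> x; exists y; first by rewrite finset.in_set1.
  by rewrite oppr0 powRr0 mul1r le_diam.
have Q0_gt0 : (0 < #|Q 0|)%N by apply/card_gt0P; exists y.
by apply/cards1P; rewrite eqn_leq Q0_gt0 andbT -(cards1 y) minc.
Qed.

End TreeGeometry.

Section GreedyPlan.
Context {R : realType} {X : finType} {d : X -> X -> R} {q : R} {L : nat}
  {Q : nat -> {set X}} {par : nat -> X -> X} {mu nu : X -> R} {p C : R}.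
Context (dm : is_metric d) (q1 : 1 < q) (td : tree_data d q L Q par).
Context (mu0 : is_measure mu) (nu0 : is_measure nu) (p1 : 1 <= p).

Local Notation hp j := (height d q L j `^ p).

(* D(j): the unmatched mass once levels L+1, ..., j have been matched; for
   j = L+2 nothing is matched yet. *)
Definition gap (j : nat) : R :=
  if j == L.+2 then mass mu + mass nu
  else \sum_(x in Q j) `|mass_desc L par mu x j - mass_desc L par nu x j|.

Record partial_plan := PartialPlan {
  rest_mu : X -> R;
  rest_nu : X -> R;
  coupled : X -> X -> R }.

Definition match_level (j : nat) (s : partial_plan) : partial_plan :=
  let g := anc L par j in
  PartialPlan (unmatched_l g (rest_mu s) (rest_nu s))
    (unmatched_r g (rest_mu s) (rest_nu s))
    (fun y y' => coupled s y y' + match_plan g (rest_mu s) (rest_nu s) y y').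

(* The plan after matching levels L+1, ..., L+2-n. *)
Fixpoint greedy (n : nat) : partial_plan :=
  if n is n'.+1 then match_level (L.+1 - n') (greedy n')
  else PartialPlan mu nu (fun _ _ => 0).

Lemma greedy_rest_ge0 n :
  (forall z, 0 <= rest_mu (greedy n) z) /\ (forall z, 0 <= rest_nu (greedy n) z).
Proof.
elim: n => [|n [a0 b0]] /=; first by split.
by split=> z; [apply: unmatched_l_ge0 | apply: unmatched_r_ge0].
Qed.

Lemma greedy_coupled_ge0 n y y' : 0 <= coupled (greedy n) y y'.
Proof.
elim: n => [//|n IH] /=; have [a0 b0] := greedy_rest_ge0 n.
by rewrite addr_ge0 // match_plan_ge0.
Qed.

Lemma greedy_marginal_mu n y :
  rest_mu (greedy n) y + \sum_y' coupled (greedy n) y y' = mu y.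
Proof.
elim: n => [|n IH] /=; first by rewrite big1 ?addr0.
by rewrite /unmatched_l big_split /= -IH; ring.
Qed.

Lemma greedy_marginal_nu n y' :
  rest_nu (greedy n) y' + \sum_y coupled (greedy n) y y' = nu y'.
Proof.
elim: n => [|n IH] /=; first by rewrite big1 ?addr0.
by rewrite /unmatched_r big_split /= -IH; ring.
Qed.

Lemma greedy_subcoupling n : subcoupling mu nu (coupled (greedy n)).
Proof.
have [a0 b0] := greedy_rest_ge0 n; split => [y y'|y|y'].
- exact: greedy_coupled_ge0.
- by rewrite -(greedy_marginal_mu n y) lerDr.
- by rewrite -(greedy_marginal_nu n y') lerDr.
Qed.

Lemma greedy_class_diff n j x : (j <= L.+2 - n)%N ->
  mass_desc L par (rest_mu (greedy n)) x j -
  mass_desc L par (rest_nu (greedy n)) x j = mass_desc L par mu x j - mass_desc L par nu x j.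
Proof.
elim: n => [//|n IH] jn; rewrite /mass_desc -!sumrB /=.
rewrite unmatched_class_diff; last first.
  by move=> y y' e; apply: (anc_coarsen _ _ _ _ e); lia.
by rewrite !sumrB IH //; lia.
Qed.

Lemma greedy_unmatched n : (n <= L.+2)%N ->
  \sum_y rest_mu (greedy n) y + \sum_y rest_nu (greedy n) y = gap (L.+2 - n).
Proof.
case: n => [_|n nL]; first by rewrite subn0 /gap eqxx.
have [a0 b0] := greedy_rest_ge0 n.
have -> : (L.+2 - n.+1 = L.+1 - n)%N by lia.
rewrite /= (unmatched_total _ a0 b0 _ (fun y => anc_in td _ y (leq_subr n L.+1))).
rewrite /gap ifF; last by apply/eqP; lia.
apply: eq_bigr => x _.
by rewrite -(greedy_class_diff n) //; lia.
Qed.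

(* The factor 2^(p-1) of B comes from (2 h)^p = 2 * 2^(p-1) h^p. *)
Lemma two_pow : 2 `^ p = 2 * 2 `^ (p - 1).
Proof. by rewrite mulr_powRB1 //; apply: lt_le_trans ltr01 p1. Qed.

(* The transport cost of the greedy plan telescopes along the levels:
   level j costs at most (2 h(j))^p per matched unit, and twice the matched
   mass is the drop D(j+1) - D(j). *)
Lemma greedy_transport n : (n <= L.+2)%N ->
  \sum_y \sum_y' d y y' `^ p * coupled (greedy n) y y' <=
  2 `^ (p - 1) * \sum_(L.+2 - n <= j < L.+2) hp j * (gap j.+1 - gap j).
Proof.
elim: n => [_|n IH nL].
  by rewrite big_geq // mulr0; do 2 (apply: sumr_le0 => ? _); rewrite mulr0.
set j := (L.+1 - n)%N; set a := rest_mu (greedy n); set b := rest_nu (greedy n).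
set m := \sum_y \sum_y' match_plan (anc L par j) a b y y'.
have jL : (j <= L.+1)%N by exact: leq_subr.
have lev_n : (L.+2 - n = j.+1)%N by rewrite /j; lia.
have lev_Sn : (L.+2 - n.+1 = j)%N by rewrite /j; lia.
have [a0 b0] := greedy_rest_ge0 n.
have matched : 2 * m = gap j.+1 - gap j.
  have := greedy_unmatched n.+1 nL; have := greedy_unmatched n (ltnW nL).
  rewrite /= -/j -/a -/b unmatched_mass // lev_n lev_Sn -/m; lra.
have level_cost : \sum_y \sum_y' d y y' `^ p * match_plan (anc L par j) a b y y'
    <= 2 * 2 `^ (p - 1) * hp j * m.
  rewrite -two_pow -powRM ?height_ge0 //; apply: match_plan_cost => // y y' ea.
  have [d0 _ _ _] := dm.
  apply: ge0_ler_powR; rewrite ?nnegrE.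
  - exact: le_trans ler01 p1.
  - exact: d0.
  - by rewrite mulr_ge0 // height_ge0.
  - exact: (dist_same_anc dm q1 td _ _ _ jL ea).
have split_cost : \sum_y \sum_y' d y y' `^ p * coupled (greedy n.+1) y y' =
    \sum_y \sum_y' d y y' `^ p * coupled (greedy n) y y' +
    \sum_y \sum_y' d y y' `^ p * match_plan (anc L par j) a b y y'.
  rewrite -big_split; apply: eq_bigr => y _; rewrite -big_split.
  by apply: eq_bigr => y' _; rewrite /= mulrDr.
rewrite split_cost lev_Sn big_ltn; last by lia.
have := IH (ltnW nL); rewrite lev_n -matched; lra.
Qed.

Lemma greedy_cost n : (n <= L.+2)%N ->
  KR_cost d p C mu nu (coupled (greedy n)) <=
  2 `^ (p - 1) * \sum_(L.+2 - n <= j < L.+2) hp j * (gap j.+1 - gap j)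
  + C `^ p / 2 * gap (L.+2 - n).
Proof.
move=> nL; rewrite /KR_cost /mass.
have mass_mu : \sum_y mu y =
    \sum_y rest_mu (greedy n) y + \sum_y \sum_y' coupled (greedy n) y y'.
  by rewrite -big_split; apply: eq_bigr => y _ /=; rewrite greedy_marginal_mu.
have mass_nu : \sum_y nu y =
    \sum_y rest_nu (greedy n) y + \sum_y \sum_y' coupled (greedy n) y y'.
  rewrite [X in _ + X]exchange_big -big_split.
  by apply: eq_bigr => y _ /=; rewrite greedy_marginal_nu.
have := greedy_transport n nL; rewrite -(greedy_unmatched n nL) mass_mu mass_nu.
lra.
Qed.

(* Leaves have height 0, so the last term of the summation by parts vanishes. *)
Lemma height_pow_leaf : hp L.+1 = 0.
Proof. by rewrite height_leaf powR0 // gt_eqF // (lt_le_trans ltr01 p1). Qed.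

Lemma Bq_gap l : Bq d q p L Q par mu nu l =
  2 `^ (p - 1) * \sum_(l <= j < L.+2) (hp j.-1 - hp j) * gap j.
Proof.
rewrite /Bq; congr (_ * _); apply: eq_big_nat => j /andP[_ jL].
by rewrite /gap ltn_eqF ?mulr_sumr.
Qed.

Lemma KR_tree_bound l : (l <= L.+1)%N ->
  KR d p C mu nu `^ p <=
  Bq d q p L Q par mu nu l.+1 + (C `^ p / 2 - 2 `^ (p - 1) * hp l) * gap l.
Proof.
move=> lL; have p0 : p != 0 by rewrite gt_eqF // (lt_le_trans ltr01 p1).
apply: le_trans (KR_pow_le_cost _ p0 (greedy_subcoupling (L.+2 - l))) _.
apply: le_trans (greedy_cost _ (leq_subr l L.+2)) _.
rewrite subKn; last by lia.
rewrite sum_by_parts // height_pow_leaf mul0r add0r Bq_gap; lra.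
Qed.

Lemma gap_ge0 j : 0 <= gap j.
Proof.
rewrite /gap; case: ifP => _; last exact: sumr_ge0.
by rewrite addr_ge0 // sumr_ge0.
Qed.

Lemma gap_root : (0 < #|X|)%N -> gap 0 = `|mass mu - mass nu|.
Proof.
move=> X0; have [x0 Q0] := root_singleton td X0.
have root_mass f : mass_desc L par f x0 0 = mass f.
  apply: eq_bigl => y; rewrite -finset.in_set1 -Q0.
  exact: (anc_in td 0 y (leq0n _)).
by rewrite /gap Q0 finset.big_set1 !root_mass.
Qed.

Lemma gap_leaves : gap L.+1 = TV mu nu.
Proof.
case: td => _ QT _.
have leaf_mass (f : X -> R) x : mass_desc L par f x L.+1 = f x.
  rewrite /mass_desc (eq_bigl (fun y => y == x)) ?big_pred1_eq // => y.
  by rewrite anc_leaf.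
rewrite /gap ltn_eqF // QT /setTfin /TV.
by apply: eq_big => [x|x _]; [rewrite finset.in_setT | rewrite !leaf_mass].
Qed.

Lemma Bq_split l : (0 < l <= L.+1)%N ->
  Bq d q p L Q par mu nu l =
  Bq d q p L Q par mu nu l.+1 + 2 `^ (p - 1) * (hp l.-1 - hp l) * gap l.
Proof. by move=> /andP[_ lL]; rewrite !Bq_gap big_ltn //; ring. Qed.

Lemma pow_half_le j : (j <= L.+1)%N -> 0 <= C -> C <= 2 * height d q L j ->
  C `^ p / 2 <= 2 `^ (p - 1) * hp j.
Proof.
move=> jL C0 Ch.
have hj := height_ge0 q1 _ jL.
have Cpow : C `^ p <= (2 * height d q L j) `^ p.
  apply: ge0_ler_powR; rewrite ?nnegrE //; first exact: le_trans ler01 p1.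
  by rewrite mulr_ge0.
by rewrite powRM // two_pow in Cpow; lra.
Qed.

End GreedyPlan.

Theorem lemma2p1 (R : realType) (X : finType) (d : X -> X -> R)
    (mu nu : X -> R) (p C q : R) (L : nat)
    (Q : nat -> {set X}) (par : nat -> X -> X) :
  is_metric d -> (1 < #|X|)%N ->
  is_measure mu -> is_measure nu ->
  1 <= p -> 0 < C -> 1 < q ->
  tree_data d q L Q par ->
  [/\ 2 * height d q L 0 <= C ->
        KR d p C mu nu `^ p <=
          (C `^ p / 2 - 2 `^ (p - 1) * height d q L 0 `^ p)
            * `|mass mu - mass nu| + Bq d q p L Q par mu nu 1,
      forall l : nat, (1 <= l <= L)%N ->
        2 * height d q L l <= C -> C < 2 * height d q L l.-1 ->
        KR d p C mu nu `^ p <= Bq d q p L Q par mu nu l &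
      C <= Num.max (2 * height d q L L) (min_dist d) ->
        KR d p C mu nu `^ p <= C `^ p / 2 * TV mu nu].
Proof.
move=> dm cardX mu0 nu0 p1 C0 q1 td.
have bound := KR_tree_bound (C := C) dm q1 td mu0 nu0 p1.
split.
- move=> _; have := bound 0%N (leq0n _).
  by rewrite (gap_root td) ?(ltnW cardX) // addrC.
- move=> l /andP[l1 lL] _ Cl.
  apply: le_trans (bound l (leqW lL)) _.
  rewrite [leRHS]Bq_split ?l1 ?(leqW lL) // lerD2l.
  apply: ler_wpM2r; first exact: gap_ge0.
  have := pow_half_le q1 p1 l.-1 (leq_trans (leq_pred l) (leqW lL)) (ltW C0) (ltW Cl).
  lra.
- move=> _; have := bound L.+1 (leqnn _).
  by rewrite /Bq big_geq // mulr0 add0r (height_pow_leaf p1) (gap_leaves td) mulr0 subr0.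
Qed.
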